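(* Let $D$ be a pre-divergence on a Polish space $\mathcal{X}$, $c$ a cost function, and $\mu\in\mathcal{P}(\mathcal{X})$. If $P\mapsto D(P\|\mu)$ is convex, then $P\mapsto D^c(P\|\mu)$ is convex.
   Context: $\mathcal{P}(\mathcal{X})$ is the set of Borel probability measures on the Polish space $\mathcal{X}$. A pre-divergence is $D:\mathcal{P}(\mathcal{X})\times\mathcal{P}(\mathcal{X})\to[0,\infty]$ with $D(\mu\|\mu)=0$ for all $\mu$. A cost function is a lower semicontinuous $c:\mathcal{X}\times\mathcal{X}\to[0,\infty]$, with OT cost $C(\mu,\nu)=\inf\{\int c\,d\pi:\pi\in\mathcal{P}(\mathcal{X}\times\mathcal{X}),\pi_1=\mu,\pi_2=\nu\}$. $D^c(\nu\|\mu)=\inf_{\eta\in\mathcal{P}(\mathcal{X})}\{D(\eta\|\mu)+C(\eta,\nu)\}$. *)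

From HB Require Import structures.
From mathcomp Require Import all_boot all_order all_algebra.
From mathcomp Require Import all_classical all_reals all_analysis.
From mathcomp Require Import measurable_realfun lebesgue_integral.
Set Implicit Arguments. Unset Strict Implicit. Unset Printing Implicit Defensive.
Import Order.TTheory GRing.Theory Num.Theory.
Local Open Scope classical_set_scope.
Local Open Scope ring_scope.
Local Open Scope ereal_scope.

Definition separable_space (T : topologicalType) :=
  exists S : set T, countable S /\ dense S.

Definition polish (R : realType) (X : completePseudoMetricType R) :=
  hausdorff_space X /\ separable_space X.

Definition borel (T : ptopologicalType) := g_sigma_algebraType (@open T).

Section ot.
Context {R : realType} {X : ptopologicalType}.
Local Notation BX := (borel X).

Definition coupling (mu nu : probability BX R)
    (pi : probability (BX * BX)%type R) :=
  forall A : set BX, measurable A ->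
    pi (A `*` setT) = mu A /\ pi (setT `*` A) = nu A.

Definition ot_cost (c : X * X -> \bar R) (mu nu : probability BX R) : \bar R :=
  ereal_inf [set \int[pi]_z (c z : \bar R) | pi in
                 [set pi : probability (BX * BX)%type R | coupling mu nu pi]].

Definition Dc (D : probability BX R -> probability BX R -> \bar R)
    (c : X * X -> \bar R) (nu mu : probability BX R) : \bar R :=
  ereal_inf [set D eta mu + ot_cost c eta nu | eta in
                 [set: probability BX R]].

Definition convex_on_prob (F : probability BX R -> \bar R) :=
  forall (P Q M : probability BX R) (t : R), (0 <= t <= 1)%R ->
    (forall A : set BX, measurable A ->
       M A = t%:E * P A + (1 - t)%:E * Q A) ->
    F M <= t%:E * F P + (1 - t)%:E * F Q.

Definition cost_measurable (c : X * X -> \bar R) :=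
  measurable_fun (setT : set (BX * BX)%type) (fun z : BX * BX => c z).

End ot.

From HB Require Import structures.
From mathcomp Require Import all_boot all_order all_algebra.
From mathcomp Require Import all_classical all_reals all_analysis.
From mathcomp Require Import measurable_realfun lebesgue_integral unstable.
Set Implicit Arguments. Unset Strict Implicit.
Import Order.TTheory GRing.Theory Num.Theory.
Local Open Scope classical_set_scope.
Local Open Scope ring_scope.
Local Open Scope ereal_scope.

(* Given competitors eta1 for P and eta2 for Q in the infimum defining D^c,
   the mixture t eta1 + (1-t) eta2 is a competitor for t P + (1-t) Q: its
   divergence is controlled by convexity of D(.||mu), and mixing couplings of
   (eta1, P) and (eta2, Q) gives a coupling of the two mixtures with the mixed
   cost, so the transport cost is jointly convex. Taking infima over eta1 and
   eta2 concludes for 0 < t < 1; the endpoints are trivial because D^c(.||mu)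
   only sees the values of its argument on measurable sets. *)

Section mixture.
Context d (T : measurableType d) (R : realType).
Variables (t : R) (t_ge0 : (0 <= t)%R) (t_le1 : (t <= 1)%R).
Variables (P Q : probability T R).

Definition mixture_measure :=
  measure_add (mscale (NngNum t_ge0) P) (mscale (NngNum (onem_ge0 t_le1)) Q).

HB.instance Definition _ := Measure.copy mixture_measure
  (measure_add (mscale (NngNum t_ge0) P) (mscale (NngNum (onem_ge0 t_le1)) Q)).

Let mixture_measure_setT : mixture_measure setT = 1.
Proof.
rewrite /mixture_measure measure_addE.
change (t%:E * P setT + (1 - t)%:E * Q setT = 1).
by rewrite !probability_setT !mule1 -EFinD add_onemK.
Qed.

HB.instance Definition _ :=
  Measure_isProbability.Build _ _ _ mixture_measure mixture_measure_setT.

Definition mixture : probability T R := mixture_measure.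

Lemma mixtureE A : mixture A = t%:E * P A + (1 - t)%:E * Q A.
Proof. exact: measure_addE. Qed.

Lemma ge0_integral_mixture (f : T -> \bar R) :
  (forall x, 0 <= f x) -> measurable_fun setT f ->
  \int[mixture]_x f x = t%:E * \int[P]_x f x + (1 - t)%:E * \int[Q]_x f x.
Proof.
by move=> f_ge0 mf; rewrite ge0_integral_measure_add // !ge0_integral_mscale.
Qed.

End mixture.

Section ereal_inf_sum.
Context {R : realType}.
Implicit Types (A B : set (\bar R)) (z : \bar R).

(* Nonnegativity excludes the junk sum -oo + +oo = -oo. *)
Lemma le_ereal_infD A B z :
  (forall x, A x -> 0 <= x) -> (forall y, B y -> 0 <= y) ->
  (forall x y, A x -> B y -> z <= x + y) ->
  z <= ereal_inf A + ereal_inf B.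
Proof.
move=> A_ge0 B_ge0 zAB; rewrite leNgt; apply/negP => ltABz.
have infA_ge0 : 0 <= ereal_inf A by apply/ereal_infP.
have infB_ge0 : 0 <= ereal_inf B by apply/ereal_infP.
have infB_fin : ereal_inf B \is a fin_num.
  rewrite ge0_fin_numE // (le_lt_trans (leeDr _ infA_ge0)) //.
  exact: lt_le_trans ltABz (leey _).
have [x Ax ltx] : exists2 x, A x & x < z - ereal_inf B.
  by apply: ereal_inf_lt; rewrite lteBrDr.
have x_fin : x \is a fin_num by rewrite ge0_fin_numE ?A_ge0 // (lt_le_trans ltx (leey _)).
have [y By lty] : exists2 y, B y & y < z - x.
  by apply: ereal_inf_lt; rewrite lteBrDr // addeC -lteBrDr.
by move: lty; rewrite lteBrDr // addeC ltNge zAB.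
Qed.

Lemma le_ereal_infZD (a b : R) A B z : (0 < a)%R -> (0 < b)%R ->
  (forall x, A x -> 0 <= x) -> (forall y, B y -> 0 <= y) ->
  (forall x y, A x -> B y -> z <= a%:E * x + b%:E * y) ->
  z <= a%:E * ereal_inf A + b%:E * ereal_inf B.
Proof.
move=> a_gt0 b_gt0 A_ge0 B_ge0 zAB; rewrite -!ereal_inf_pZl //.
apply: le_ereal_infD => [_ [x Ax <-]|_ [y By <-]|_ _ [x Ax <-] [y By <-]].
- by apply: mule_ge0; [rewrite lee_fin ltW | exact: A_ge0].
- by apply: mule_ge0; [rewrite lee_fin ltW | exact: B_ge0].
- exact: zAB.
Qed.

End ereal_inf_sum.

Section transport.
Context {R : realType} {X : ptopologicalType}.
Local Notation BX := (borel X).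
Implicit Types (c : X * X -> \bar R) (mu nu P Q M : probability BX R).

Lemma ot_cost_ge0 c mu nu : (forall z, 0 <= c z) -> 0 <= ot_cost c mu nu.
Proof. by move=> c_ge0; apply/ereal_infP => _ [pi _ <-]; exact: integral_ge0. Qed.

Lemma ot_cost_congr c mu nu nu' : (forall A, measurable A -> nu A = nu' A) ->
  ot_cost c mu nu = ot_cost c mu nu'.
Proof.
move=> nu_nu'; rewrite /ot_cost; congr ereal_inf; apply/seteqP.
by split=> _ [pi pi_cpl <-]; exists pi => // A mA;
  have [-> ->] := pi_cpl A mA; rewrite nu_nu'.
Qed.

Lemma ot_cost_mixture c (t : R) (t_gt0 : (0 < t)%R) (t_lt1 : (t < 1)%R)
    eta1 eta2 P Q M :
  (forall z, 0 <= c z) -> cost_measurable c ->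
  (forall A, measurable A -> M A = t%:E * P A + (1 - t)%:E * Q A) ->
  ot_cost c (mixture (ltW t_gt0) (ltW t_lt1) eta1 eta2) M <=
    t%:E * ot_cost c eta1 P + (1 - t)%:E * ot_cost c eta2 Q.
Proof.
move=> c_ge0 c_meas ME; apply: le_ereal_infZD; rewrite ?subr_gt0 //.
- by move=> _ [pi _ <-]; exact: integral_ge0.
- by move=> _ [pi _ <-]; exact: integral_ge0.
move=> _ _ [pi1 pi1_cpl <-] [pi2 pi2_cpl <-].
apply: ereal_inf_lbound; exists (mixture (ltW t_gt0) (ltW t_lt1) pi1 pi2).
  move=> A mA; rewrite !mixtureE ME //.
  by have [-> ->] := pi1_cpl A mA; have [-> ->] := pi2_cpl A mA.
by rewrite ge0_integral_mixture.
Qed.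

Lemma Dc_congr D c mu nu nu' : (forall A, measurable A -> nu A = nu' A) ->
  Dc D c nu mu = Dc D c nu' mu.
Proof.
by move=> nu_nu'; rewrite /Dc; under eq_imagel do rewrite (ot_cost_congr _ _ nu_nu').
Qed.

Lemma convex_on_prob_interior (F : probability BX R -> \bar R) :
  (forall P Q, (forall A, measurable A -> P A = Q A) -> F P = F Q) ->
  (forall P Q M (t : R), (0 < t < 1)%R ->
    (forall A, measurable A -> M A = t%:E * P A + (1 - t)%:E * Q A) ->
    F M <= t%:E * F P + (1 - t)%:E * F Q) ->
  convex_on_prob F.
Proof.
move=> F_congr F_conv P Q M t /andP[t_ge0 t_le1] ME.
have [t0|t_neq0] := eqVneq t 0%R.
  rewrite t0 subr0 mul0e add0e mul1e (F_congr M Q) // => A mA.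
  by rewrite ME // t0 subr0 mul0e add0e mul1e.
have [t1|t_neq1] := eqVneq t 1%R.
  rewrite t1 subrr mul0e adde0 mul1e (F_congr M P) // => A mA.
  by rewrite ME // t1 subrr mul0e adde0 mul1e.
by apply: F_conv => //; rewrite !lt_def t_neq0 t_ge0 eq_sym t_neq1 t_le1.
Qed.

End transport.

Theorem lemma1 (R : realType) (X : completePseudoMetricType R)
  (hX : polish X)
  (D : probability (borel X) R -> probability (borel X) R -> \bar R)
  (D_ge0 : forall P Q, 0 <= D P Q)
  (D_refl : forall P, D P P = 0)
  (c : X * X -> \bar R)
  (c_ge0 : forall z, 0 <= c z)
  (c_lsc : lower_semicontinuous c)
  (c_meas : cost_measurable c)
  (mu : probability (borel X) R) :
  convex_on_prob (fun P => D P mu) ->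
  convex_on_prob (fun P => Dc D c P mu).
Proof.
move=> D_conv; apply: convex_on_prob_interior; first exact: Dc_congr.
move=> P Q M t /andP[t_gt0 t_lt1] ME /=.
have Dc_ge0 nu x : [set D eta mu + ot_cost c eta nu | eta in setT] x -> 0 <= x.
  by move=> [eta _ <-]; rewrite adde_ge0 ?ot_cost_ge0.
apply: le_ereal_infZD; rewrite ?subr_gt0 //; [exact: Dc_ge0 | exact: Dc_ge0 |].
move=> _ _ [eta1 _ <-] [eta2 _ <-].
set eta := mixture (ltW t_gt0) (ltW t_lt1) eta1 eta2.
apply: (@le_trans _ _ (D eta mu + ot_cost c eta M)).
  by apply: ereal_inf_lbound; exists eta.
rewrite !ge0_muleDr ?ot_cost_ge0 // addeACA; apply: leeD.
- by apply: D_conv => [|A mA]; rewrite ?mixtureE ?ltW.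
- exact: ot_cost_mixture.
Qed.
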